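(* Let $a,d\in\mathbb{C}\setminus\{0\}$ and $b=0$. Then there exists $\varepsilon>0$ (depending on $a$ and $d$) such that for every $f\in\mathbb{C}$ with $|f|<\varepsilon$, the node-wise equi-M sets of the system $z_1(n+1)=(az_1(n))^2+c$, $z_2(n+1)=(dz_1(n)+fz_2(n))^2+c$ coincide: $\mathcal{M}(z_1)=\mathcal{M}(z_2)$.
   Context: For $c\in\mathbb{C}$, the 2D coupled quadratic system with connectivity matrix $A=\begin{pmatrix}a&b\\ d&f\end{pmatrix}$ is the iteration $z_1(n+1)=(az_1(n)+bz_2(n))^2+c$, $z_2(n+1)=(dz_1(n)+fz_2(n))^2+c$. The critical orbit is the orbit with $z_1(0)=z_2(0)=0$. The node-wise equi-M set $\mathcal{M}(z_k)$ ($k=1,2$) is the set of $c\in\mathbb{C}$ for which the sequence $(z_k(n))_{n\ge0}$ of the critical orbit is bounded. *)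

From Stdlib Require Import Reals.
From Coquelicot Require Export Coquelicot.
Open Scope C_scope.

Fixpoint crit_orbit (a b d f c : C) (n : nat) : C * C :=
  match n with
  | O => (RtoC 0%R, RtoC 0%R)
  | S m =>
      let z := crit_orbit a b d f c m in
      let u := a * fst z + b * snd z in
      let v := d * fst z + f * snd z in
      (u * u + c, v * v + c)
  end.

Definition equiM1 (a b d f : C) : C -> Prop :=
  fun c => exists B : R, forall n : nat, (Cmod (fst (crit_orbit a b d f c n)) <= B)%R.

Definition equiM2 (a b d f : C) : C -> Prop :=
  fun c => exists B : R, forall n : nat, (Cmod (snd (crit_orbit a b d f c n)) <= B)%R.

From Stdlib Require Import Reals Lra.
From Coquelicot Require Import Coquelicot.
Open Scope C_scope.

(* For b = 0 the first node is autonomous: z1(n+1) = (a z1(n))^2 + c, with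
   escape radius K = 2/|a|^2.  The proof has three parts.
   1. An escape lemma for real sequences with s(n+1) >= al s(n)^2 - g: once
      s exceeds some t > 2/al with t >= g it grows at least linearly, hence is
      unbounded.  Applied to s(n) = |z1(n)| (al = |a|^2, g = |c|) it shows that
      c in M(z1) forces |c| <= K and |z1(n)| <= K for every n.
   2. M(z1) ⊆ M(z2) for |f| < eps := 1/R0, with R0 = (|d|K+1)^2 + K + 1:
      by induction |z2(n)| <= R0, since then |f z2(n)| <= 1 and
      |z2(n+1)| <= (|d|K + 1)^2 + |c| <= R0.
   3. M(z2) ⊆ M(z1) for every f (only d <> 0 is used): if |z2| <= M then
      v(n) = d z1(n) + f z2(n) satisfies |v(n)|^2 <= |z2(n+1)| + |c| <= 2M,
      so |d z1(n)| <= |v(n)| + |f| M is bounded. *)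

Lemma crit_orbit_S (a b d f c : C) (n : nat) :
  crit_orbit a b d f c (S n) =
  let z := crit_orbit a b d f c n in
  ((a * fst z + b * snd z) * (a * fst z + b * snd z) + c,
   (d * fst z + f * snd z) * (d * fst z + f * snd z) + c).
Proof. reflexivity. Qed.

Lemma Cmod_plus_ge (x c : C) : (Cmod x - Cmod c <= Cmod (x + c))%R.
Proof.
  pose proof (Cmod_triangle (x + c) (- c)) as Htri.
  rewrite Cmod_opp in Htri.
  replace (x + c + - c) with x in Htri by ring.
  lra.
Qed.

(* Escape lemma: a nonnegative sequence with s(n+1) >= al s(n)^2 - g that ever
   reaches a level t > 2/al (with t >= g) grows by at least t (al t - 2) per
   step from then on, hence is unbounded. *)
Lemma quadratic_escape (s : nat -> R) (al g t : R) (k : nat) :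
  (0 < al)%R ->
  (forall n, al * s n * s n - g <= s (S n))%R ->
  (2 / al < t)%R -> (g <= t)%R -> (t <= s k)%R ->
  forall B, exists n, (B < s n)%R.
Proof.
  intros Hal Hrec Ht Hg Hk.
  assert (Hat : (2 < al * t)%R).
  { apply (Rmult_lt_compat_l al) in Ht; [|lra].
    unfold Rdiv in Ht.
    rewrite <- Rmult_assoc, (Rmult_comm al 2), Rmult_assoc, Rinv_r in Ht; lra. }
  assert (Ht0 : (0 < t)%R) by nra.
  set (dl := (t * (al * t - 2))%R).
  assert (Hdl : (0 < dl)%R) by (unfold dl; nra).
  assert (Hlin : forall m, (t + INR m * dl <= s (k + m)%nat)%R).
  { induction m as [|m IHm].
    - rewrite Nat.add_0_r; simpl; lra.
    - rewrite Nat.add_succ_r, S_INR.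
      specialize (Hrec (k + m)%nat).
      set (x := s (k + m)%nat) in *.
      assert (Htx : (t <= x)%R) by (pose proof (pos_INR m); nra).
      assert (Hgain : (al * t - 2 <= al * x - 2)%R) by nra.
      assert (Hgrow : (x + dl <= al * x * x - g)%R) by (unfold dl; nra).
      nra. }
  intros B.
  destruct (INR_unbounded (B / dl)) as [m Hm].
  exists (k + m)%nat.
  specialize (Hlin m).
  assert (HmB : (B < INR m * dl)%R).
  { apply (Rmult_lt_compat_r dl) in Hm; [|lra].
    unfold Rdiv in Hm. rewrite Rmult_assoc, Rinv_l in Hm; lra. }
  lra.
Qed.

Lemma equiM1_escape_radius (a d f c : C) :
  a <> 0 -> equiM1 a 0 d f c ->
  (Cmod c <= 2 / (Cmod a * Cmod a))%R /\
  forall n, (Cmod (fst (crit_orbit a 0 d f c n)) <= 2 / (Cmod a * Cmod a))%R.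
Proof.
  intros ha [B HB].
  set (s := fun n => Cmod (fst (crit_orbit a 0 d f c n))).
  set (al := (Cmod a * Cmod a)%R).
  assert (Hal : (0 < al)%R) by (apply Cmod_gt_0 in ha; unfold al; nra).
  assert (Hrec : forall n, (al * s n * s n - Cmod c <= s (S n))%R).
  { intro n. unfold s. rewrite crit_orbit_S. simpl fst.
    rewrite Cmult_0_l, Cplus_0_r.
    eapply Rle_trans; [|apply Cmod_plus_ge].
    rewrite !Cmod_mult. unfold al. lra. }
  assert (Hs1 : s 1%nat = Cmod c) by (unfold s; simpl; f_equal; ring).
  assert (Hcap : forall k t, (2 / al < t)%R -> (Cmod c <= t)%R -> (t <= s k)%R -> False).
  { intros k t Ht Hg Hk.
    destruct (quadratic_escape s al (Cmod c) t k Hal Hrec Ht Hg Hk B) as [n Hn].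
    specialize (HB n). unfold s in Hn. lra. }
  assert (Hc : (Cmod c <= 2 / al)%R).
  { destruct (Rle_or_lt (Cmod c) (2 / al)) as [H|H]; [exact H|].
    exfalso. apply (Hcap 1%nat (Cmod c)); lra. }
  split; [exact Hc|].
  intro n. destruct (Rle_or_lt (s n) (2 / al)) as [H|H]; [exact H|].
  exfalso. apply (Hcap n (s n)); lra.
Qed.

Lemma equiM1_sub_equiM2 (a d f c : C) (K : R) :
  (0 <= K)%R -> (Cmod c <= K)%R ->
  (forall n, Cmod (fst (crit_orbit a 0 d f c n)) <= K)%R ->
  (Cmod f * ((Cmod d * K + 1) * (Cmod d * K + 1) + K + 1) <= 1)%R ->
  forall n, (Cmod (snd (crit_orbit a 0 d f c n)) <=
             (Cmod d * K + 1) * (Cmod d * K + 1) + K + 1)%R.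
Proof.
  intros HK Hc Hu Hf.
  set (R0 := ((Cmod d * K + 1) * (Cmod d * K + 1) + K + 1)%R) in *.
  pose proof (Cmod_ge_0 d).
  assert (HR0 : (1 <= R0)%R) by (unfold R0; nra).
  induction n as [|n IHn].
  - simpl. rewrite Cmod_0. lra.
  - rewrite crit_orbit_S. simpl snd.
    set (u := fst (crit_orbit a 0 d f c n)) in *.
    set (y := snd (crit_orbit a 0 d f c n)) in *.
    specialize (Hu n). fold u in Hu.
    assert (Hfy : (Cmod f * Cmod y <= 1)%R).
    { pose proof (Cmod_ge_0 f). nra. }
    assert (Hv : (Cmod (d * u + f * y) <= Cmod d * K + 1)%R).
    { eapply Rle_trans; [apply Cmod_triangle|]. rewrite !Cmod_mult.
      pose proof (Cmod_ge_0 u). nra. }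
    eapply Rle_trans; [apply Cmod_triangle|]. rewrite Cmod_mult.
    pose proof (Cmod_ge_0 (d * u + f * y)).
    unfold R0. nra.
Qed.

Lemma equiM2_sub_equiM1 (a d f c : C) :
  d <> 0 -> equiM2 a 0 d f c -> equiM1 a 0 d f c.
Proof.
  intros hd [M HM].
  assert (Hc : (Cmod c <= M)%R).
  { specialize (HM 1%nat). simpl in HM.
    replace ((d * 0 + f * 0) * (d * 0 + f * 0) + c) with c in HM by ring.
    exact HM. }
  exists ((1 + M + M + Cmod f * M) / Cmod d)%R.
  intro n.
  pose proof (HM (S n)) as Hnext. rewrite crit_orbit_S in Hnext. simpl snd in Hnext.
  set (u := fst (crit_orbit a 0 d f c n)) in *.
  set (y := snd (crit_orbit a 0 d f c n)) in *.
  set (v := d * u + f * y) in *.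
  assert (Hv2 : (Cmod v * Cmod v <= M + Cmod c)%R).
  { rewrite <- Cmod_mult. pose proof (Cmod_plus_ge (v * v) c). lra. }
  assert (Hv : (Cmod v <= 1 + M + M)%R) by (pose proof (Cmod_ge_0 v); nra).
  assert (Hdu : (Cmod d * Cmod u <= 1 + M + M + Cmod f * M)%R).
  { rewrite <- Cmod_mult.
    replace (d * u) with (v + - (f * y)) by (unfold v; ring).
    eapply Rle_trans; [apply Cmod_triangle|]. rewrite Cmod_opp, Cmod_mult.
    pose proof (HM n) as Hy. fold y in Hy. pose proof (Cmod_ge_0 f).
    nra. }
  apply Cmod_gt_0 in hd.
  apply (Rmult_le_reg_l (Cmod d)); [exact hd|].
  unfold Rdiv. rewrite (Rmult_comm _ (/ Cmod d)), <- Rmult_assoc, Rinv_r; lra.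
Qed.

Theorem mainTheorem11 (a d : C) (ha : a <> 0) (hd : d <> 0) :
  exists eps : R, (0 < eps)%R /\
    forall f : C, (Cmod f < eps)%R ->
      forall c : C, equiM1 a 0 d f c <-> equiM2 a 0 d f c.
Proof.
  set (K := (2 / (Cmod a * Cmod a))%R).
  assert (HK : (0 <= K)%R).
  { unfold K. apply Rdiv_le_0_compat; [lra|]. apply Cmod_gt_0 in ha. nra. }
  set (R0 := ((Cmod d * K + 1) * (Cmod d * K + 1) + K + 1)%R).
  assert (HR0 : (1 <= R0)%R) by (pose proof (Cmod_ge_0 d); unfold R0; nra).
  exists (/ R0)%R. split; [apply Rinv_0_lt_compat; lra|].
  intros f Hf c. split.
  - intros H1.
    destruct (equiM1_escape_radius a d f c ha H1) as [Hc Hu].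
    assert (HfR0 : (Cmod f * R0 <= 1)%R).
    { apply (Rmult_lt_compat_r R0) in Hf; [|lra].
      rewrite Rinv_l in Hf; lra. }
    exists R0. exact (equiM1_sub_equiM2 a d f c K HK Hc Hu HfR0).
  - apply equiM2_sub_equiM1, hd.
Qed.
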